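(* Consider the generalized trimmed lasso problem $\min_{x_0,\ldots,x_L} f(x_0,\ldots,x_L)+\sum_{l=1}^L\gamma_lT_{K_l,m_l,p_l}(D_lx_l-c_l)$, and suppose that for each $l\in[L]$ a point $\overline{x}_l$ with $D_l\overline{x}_l=c_l$ is given. (a) If $f(x_0,\ldots,x_L)=\frac12\|b-\sum_{l=0}^LA_lx_l\|_2^2$ with $b\in\mathbb{R}^q$, $A_l\in\mathbb{R}^{q\times n_l}$, then every d-stationary point $(x_0^*,\ldots,x_L^* )$ satisfies $T_{K_l,m_l,p_l}(D_lx_l^*-c_l)=0$ for all $l\in[L]$ provided that for all $l\in[L]$ $$\gamma_l>\frac{1}{\sigma_{K_l,m_l,p_l}(D_l)}\|A_l\|_2\Big\|b-\sum_{k=1}^LA_k\overline{x}_k\Big\|_2.$$ (b) If $n_0=0$, $p_l=1$, $D_l=I$, $c_l=0$ for all $l$, and $f(x_1,\ldots,x_L)=\frac12\|b-\sum_{l=1}^LA_lx_l\|_2^2+\sum_{l=1}^L\eta_l\|x_l\|_1$ with $b\in\mathbb{R}^q$, $A_l\in\mathbb{R}^{q\times n_l}$, $\eta_l\ge0$, then every d-stationary point $(x_1^*,\ldots,x_L^* )$ satisfies $T_{K_l,n_l,1}(x_l^* )=0$ for all $l$ provided $\gamma_l>\max_{j\in[n_l]}\|a_j^{(l)}\|_2\|b\|_2-\eta_l$ for all $l$, where $a_j^{(l)}$ is the $j$-th column of $A_l$.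
   Context: Trimmed $\ell_1$ norm: $T_{K,m,p}(z)=\min_{\Lambda\subset[m],|\Lambda|=m-K}\sum_{i\in\Lambda}\|z_i\|_2$ for $z=(z_1^\top,\ldots,z_m^\top)^\top$, $z_i\in\mathbb{R}^p$, $K\in\{0,\ldots,m-1\}$. Data: $n_0\ge0$, $\gamma_l>0$, $K_l\in\{0,\ldots,m_l-1\}$, $c_l\in\mathbb{R}^{m_lp_l}$, $D_l\ne0$ an $m_lp_l\times n_l$ matrix. $\|A\|_2$ is the spectral norm (largest singular value). d-stationary: directional derivative of the objective at the point is $\ge0$ in every direction. $\sigma_{\min}(A)$ = smallest nonzero singular value. For $D$ with $p\times n$ blocks and $(D)_\Lambda$ the submatrix of blocks indexed by $\Lambda$: $\sigma_{K,m,p}(D)=\sigma_{\min}(D)$ if $D$ is surjective, else $\min\{\sigma_{\min}((D)_\Lambda)\mid \Lambda\subset[m],|\Lambda|=m-K,(D)_\Lambda\ne0\}$. *)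

From HB Require Import structures.
From mathcomp Require Import all_boot all_order all_algebra.
From mathcomp Require Import all_classical all_reals all_analysis.
Set Implicit Arguments. Unset Strict Implicit. Unset Printing Implicit Defensive.
Import Order.TTheory GRing.Theory Num.Theory.
Import numFieldNormedType.Exports.
Local Open Scope classical_set_scope.
Local Open Scope ring_scope.

(* block i (0-based) of z in R^(m p) occupies entries i*p, ..., i*p+p-1 *)
Lemma blk_idx_proof (m p : nat) (i : 'I_m) (j : 'I_p) : (i * p + j < m * p)%N.
Proof.
case: i j => i Hi [j Hj] /=.
have -> : (m = i.+1 + (m - i.+1))%N by rewrite subnKC.
rewrite mulnDl mulSn; apply: (leq_trans (n := i * p + p)%N).
  by rewrite ltn_add2l. by rewrite addnC leq_addr.
Qed.

Definition blk_idx (m p : nat) (i : 'I_m) (j : 'I_p) : 'I_(m * p) :=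
  Ordinal (blk_idx_proof i j).

Lemma blk_div_proof (a p : nat) (k : 'I_(a * p)) : (k %/ p < a)%N.
Proof.
case: p k => [|p] k; first by case: k => k; rewrite muln0.
by rewrite ltn_divLR // ltn_ord.
Qed.

Lemma blk_mod_proof (a p : nat) (k : 'I_(a * p)) : (k %% p < p)%N.
Proof.
case: p k => [|p] k; first by case: k => k; rewrite muln0.
by rewrite ltn_pmod.
Qed.

Definition blk_div (a p : nat) (k : 'I_(a * p)) : 'I_a := Ordinal (blk_div_proof k).
Definition blk_mod (a p : nat) (k : 'I_(a * p)) : 'I_p := Ordinal (blk_mod_proof k).

Definition norm2 {R : realType} {n : nat} (x : 'cV[R]_n) : R :=
  Num.sqrt (\sum_(i < n) x i 0 ^+ 2).
Definition norm1 {R : realType} {n : nat} (x : 'cV[R]_n) : R :=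
  \sum_(i < n) `|x i 0|.

Definition block {R : realType} {m p : nat} (z : 'cV[R]_(m * p)) (i : 'I_m) : 'cV[R]_p :=
  \col_(j < p) z (blk_idx i j) 0.

Definition trimmed {R : realType} (K m p : nat) (z : 'cV[R]_(m * p)) : R :=
  inf [set t : R | exists Lam : {set 'I_m},
         #|Lam| = (m - K)%N /\ t = \sum_(i in Lam) norm2 (block z i)].

Definition singular_value {R : realType} {a n : nat} (A : 'M[R]_(a, n)) (s : R) : Prop :=
  0 <= s /\ eigenvalue (A^T *m A) (s ^+ 2).

Definition spec_norm {R : realType} {a n : nat} (A : 'M[R]_(a, n)) : R :=
  sup [set s | singular_value A s].

Definition sigma_min {R : realType} {a n : nat} (A : 'M[R]_(a, n)) : R :=
  inf [set s | singular_value A s /\ s != 0].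

(* (D)_Lam : the submatrix of D made of the p x n row blocks indexed by Lam *)
Definition subblocks {R : realType} {m p n : nat} (D : 'M[R]_(m * p, n))
  (Lam : {set 'I_m}) : 'M[R]_(#|Lam| * p, n) :=
  \matrix_(k, j) D (blk_idx (enum_val (blk_div k)) (blk_mod k)) j.

(* D surjective as a map R^n -> R^(m p) iff its rank is m p *)
Definition sigmaK {R : realType} (K m p n : nat) (D : 'M[R]_(m * p, n)) : R :=
  if \rank D == (m * p)%N then sigma_min D
  else inf [set s | exists Lam : {set 'I_m},
              [/\ #|Lam| = (m - K)%N, subblocks D Lam != 0 & s = sigma_min (subblocks D Lam)]].

Definition dstationary {R : realType} {L : nat} {n0 : nat} {n : 'I_L -> nat}
  (Phi : 'cV[R]_n0 -> (forall l : 'I_L, 'cV[R]_(n l)) -> R)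
  (x0 : 'cV[R]_n0) (xs : forall l : 'I_L, 'cV[R]_(n l)) : Prop :=
  forall (d0 : 'cV[R]_n0) (ds : forall l : 'I_L, 'cV[R]_(n l)),
    exists2 v : R,
      (fun t : R => (Phi (x0 + t *: d0) (fun l => xs l + t *: ds l) - Phi x0 xs) / t)
        @ 0%R^'+ --> v
      & 0 <= v.

Arguments trimmed {R} K m p z.
Arguments sigmaK {R} K m p n D.
Arguments blk_idx {m p} i j.


(* At a d-stationary point, a block [l] with positive trimmed norm [T_l] can be
   moved in two directions, each decreasing the trimmed penalty at rate
   [gamma_l T_l]:
   - towards the reference point (all blocks), which scales every trimmed norm by
     [1 - t] while moving the residual [r] towards the reference residual; this is
     a descent direction unless [|r| < |rbar|];
   - inside block [l] only, along a least-norm [d] annihilating the [m_l - K_l]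
     smallest blocks of [D_l x_l - c_l]; since [sigma_K |d| <= T_l], the loss grows
     at rate at most [|r| |A_l| T_l / sigma_K], so stationarity forces
     [gamma_l <= |A_l| |r| / sigma_K].
   Together with [|r| < |rbar|] this contradicts the assumed lower bound on
   [gamma_l]. Part (b) is the same argument with [rbar = b], the rate of the second
   direction being bounded through the columns of [A_l] and the l1 terms. *)

From HB Require Import structures.
From mathcomp Require Import all_boot all_order all_algebra.
From mathcomp Require Import all_classical all_reals all_analysis.
From mathcomp Require Import complex polyrcf.
From mathcomp Require Import ring lra zify.
Set Implicit Arguments. Unset Strict Implicit. Unset Printing Implicit Defensive.
Import Order.TTheory GRing.Theory Num.Theory Num.Def.
Import numFieldNormedType.Exports.
Local Open Scope classical_set_scope.
Local Open Scope ring_scope.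

Section FiniteExtrema.
Variable R : realType.
Implicit Types (s : seq R) (S : set R).

Lemma finite_set_min s S : S `<=` [set x | x \in s] -> S !=set0 ->
  exists2 x, S x & lbound S x.
Proof.
move=> Ss [y Sy].
have inS z : S z -> (index z s < size s)%N by move=> /Ss; rewrite /= index_mem.
have nthS z (Sz : S z) : nth 0 s (Ordinal (inS z Sz)) = z by rewrite nth_index //; exact: Ss.
pose P (i : 'I_(size s)) := `[< S (nth 0 s i) >].
have P0 : P (Ordinal (inS y Sy)) by apply/asboolP; rewrite nthS.
case: (arg_minP (fun i : 'I_(size s) => nth 0 s i) P0) => i /asboolP Si imin.
exists (nth 0 s i) => // z Sz; rewrite -(nthS z Sz).
by apply: imin; apply/asboolP; rewrite nthS.
Qed.

Lemma finite_set_max s S : S `<=` [set x | x \in s] -> S !=set0 ->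
  exists2 x, S x & ubound S x.
Proof.
move=> Ss [y Sy].
have NSs : -%R @` S `<=` [set x | x \in map -%R s].
  by move=> _ [z /Ss zs <-]; rewrite /= map_f.
have [_ [x Sx <-] xmin] := finite_set_min NSs (ex_intro _ (- y) (ex_intro2 _ _ y Sy erefl)).
by exists x => // z Sz; rewrite -lerN2; apply: xmin; exists z.
Qed.

Lemma finite_set_inf s S : S `<=` [set x | x \in s] -> S !=set0 ->
  S (inf S) /\ lbound S (inf S).
Proof.
move=> Ss S0; have [x Sx xmin] := finite_set_min Ss S0.
suff -> : inf S = x by [].
apply/le_anti; rewrite ge_inf //=; last by exists x.
by apply: lb_le_inf => //; exists x.
Qed.

Lemma finite_set_sup s S : S `<=` [set x | x \in s] -> S !=set0 ->
  S (sup S) /\ ubound S (sup S).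
Proof.
move=> Ss S0; have [x Sx xmax] := finite_set_max Ss S0.
suff -> : sup S = x by [].
apply/le_anti; rewrite ge_sup //=.
by apply: ub_le_sup => //; exists x.
Qed.

End FiniteExtrema.

Section EuclideanNorm.
Variable R : realType.
Implicit Types (n : nat) (a t : R).

Definition dotv n (x y : 'cV[R]_n) : R := \sum_i x i 0 * y i 0.
Definition sqnorm2 n (x : 'cV[R]_n) : R := \sum_i x i 0 ^+ 2.

Lemma norm2E n (x : 'cV[R]_n) : norm2 x = Num.sqrt (sqnorm2 x).
Proof. by []. Qed.

Lemma sqnorm2_ge0 n (x : 'cV[R]_n) : 0 <= sqnorm2 x.
Proof. by apply: sumr_ge0 => i _; rewrite sqr_ge0. Qed.

Lemma sqnorm2_eq0 n (x : 'cV[R]_n) : sqnorm2 x = 0 -> x = 0.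
Proof.
move=> /eqP; rewrite psumr_eq0 => [/allP x0|i _]; last exact: sqr_ge0.
apply/matrixP => i j; rewrite (ord1 j) mxE.
by have := x0 i (mem_index_enum _); rewrite implyTb sqrf_eq0 => /eqP.
Qed.

Lemma norm2_ge0 n (x : 'cV[R]_n) : 0 <= norm2 x.
Proof. exact: sqrtr_ge0. Qed.

Lemma norm2_sqr n (x : 'cV[R]_n) : norm2 x ^+ 2 = sqnorm2 x.
Proof. by rewrite sqr_sqrtr // sqnorm2_ge0. Qed.

Lemma norm2_eq0 n (x : 'cV[R]_n) : norm2 x = 0 -> x = 0.
Proof. by move=> x0; apply: sqnorm2_eq0; rewrite -norm2_sqr x0 expr0n. Qed.

Lemma mul_norm2 n a (x : 'cV[R]_n) : 0 <= a ->
  a * norm2 x = Num.sqrt (a ^+ 2 * sqnorm2 x).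
Proof. by move=> a0; rewrite sqrtrM ?sqr_ge0 // sqrtr_sqr ger0_norm. Qed.

Lemma sqnorm2Z n a (x : 'cV[R]_n) : sqnorm2 (a *: x) = a ^+ 2 * sqnorm2 x.
Proof. by rewrite /sqnorm2 mulr_sumr; apply: eq_bigr => i _; rewrite mxE exprMn. Qed.

Lemma norm2Z n a (x : 'cV[R]_n) : norm2 (a *: x) = `|a| * norm2 x.
Proof. by rewrite !norm2E sqnorm2Z sqrtrM ?sqr_ge0 // sqrtr_sqr. Qed.

Lemma norm2N n (x : 'cV[R]_n) : norm2 (- x) = norm2 x.
Proof. by rewrite -scaleN1r norm2Z normrN normr1 mul1r. Qed.

Lemma norm1_ge0 n (x : 'cV[R]_n) : 0 <= norm1 x.
Proof. exact: sumr_ge0. Qed.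

Lemma sqrt_sum_sqr_le (I : finType) (P : pred I) (F : I -> R) :
  (forall i, 0 <= F i) -> Num.sqrt (\sum_(i | P i) F i ^+ 2) <= \sum_(i | P i) F i.
Proof.
move=> F0; have S0 : 0 <= \sum_(i | P i) F i by apply: sumr_ge0.
rewrite -[X in _ <= X](ger0_norm S0) -sqrtr_sqr ler_sqrt ?sqr_ge0 //.
rewrite expr2 mulr_suml; apply: ler_sum => i Pi.
by rewrite expr2 ler_wpM2l // (bigD1 i) //= lerDl sumr_ge0.
Qed.

Lemma dotvC n (x y : 'cV[R]_n) : dotv x y = dotv y x.
Proof. by apply: eq_bigr => i _; rewrite mulrC. Qed.

Lemma dotv0l n (y : 'cV[R]_n) : dotv 0 y = 0.
Proof. by rewrite /dotv big1 // => i _; rewrite mxE mul0r. Qed.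

Lemma dotvZl n a (x y : 'cV[R]_n) : dotv (a *: x) y = a * dotv x y.
Proof. by rewrite /dotv mulr_sumr; apply: eq_bigr => i _; rewrite mxE mulrA. Qed.

Lemma dotvNl n (x y : 'cV[R]_n) : dotv (- x) y = - dotv x y.
Proof. by rewrite /dotv -sumrN; apply: eq_bigr => i _; rewrite mxE mulNr. Qed.

Lemma dotvBr n (x y : 'cV[R]_n) : dotv x (x - y) = sqnorm2 x - dotv x y.
Proof. by rewrite /dotv -sumrB; apply: eq_bigr => i _; rewrite !mxE; ring. Qed.

Lemma sqnorm2_subZ n t (x y : 'cV[R]_n) :
  sqnorm2 (x - t *: y) = sqnorm2 x - 2 * t * dotv x y + t ^+ 2 * sqnorm2 y.
Proof.
rewrite /sqnorm2 /dotv !mulr_sumr -sumrB -big_split /=.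
by apply: eq_bigr => i _; rewrite !mxE; ring.
Qed.

Lemma dotv_le n (x y : 'cV[R]_n) : dotv x y <= norm2 x * norm2 y.
Proof.
set a := norm2 x; set b := norm2 y.
have [/norm2_eq0 ->|a0] := eqVneq a 0; first by rewrite dotv0l mulr_ge0 ?norm2_ge0.
have [/norm2_eq0 ->|b0] := eqVneq b 0; first by rewrite dotvC dotv0l mulr_ge0 ?norm2_ge0.
have ab_gt0 : 0 < a * b by rewrite mulr_gt0 // lt_def ?a0 ?b0 norm2_ge0.
(* [0 <= |b x - a y|^2 = 2 a b (a b - <x, y>)] *)
have := sqnorm2_ge0 (b *: x - a *: y).
rewrite sqnorm2_subZ sqnorm2Z dotvZl -!norm2_sqr -/a -/b => h.
by rewrite -(ler_pM2r ab_gt0); nra.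
Qed.

Lemma normr_dotv_le n (x y : 'cV[R]_n) : `|dotv x y| <= norm2 x * norm2 y.
Proof.
have := dotv_le (- x) y; rewrite dotvNl norm2N => le_Nxy.
by rewrite ler_norml dotv_le andbT lerNl.
Qed.

Lemma dotv_mulmx k n (x : 'cV[R]_k) (B : 'M[R]_(k, n)) (d : 'cV[R]_n) :
  dotv x (B *m d) = \sum_j d j 0 * dotv x (col j B).
Proof.
rewrite /dotv; under eq_bigr => i _ do rewrite mxE mulr_sumr.
rewrite exchange_big /=; apply: eq_bigr => j _.
by rewrite mulr_sumr; apply: eq_bigr => i _; rewrite !mxE; ring.
Qed.

Lemma normr_dotv_mulmx_le k n (x : 'cV[R]_k) (B : 'M[R]_(k, n)) (d : 'cV[R]_n) :
  `|dotv x (B *m d)| <= norm2 x * \big[Num.max/0]_(j < n) norm2 (col j B) * norm1 d.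
Proof.
rewrite dotv_mulmx /norm1 mulr_sumr; apply: le_trans (ler_norm_sum _ _ _) _.
apply: ler_sum => j _; rewrite normrM mulrC ler_wpM2r //.
apply: le_trans (normr_dotv_le _ _) _; rewrite ler_wpM2l ?norm2_ge0 //.
exact: le_bigmax.
Qed.

End EuclideanNorm.

Section GramSpectral.
Variable R : realType.
Local Open Scope complex_scope.
Local Notation C := R[i].
Local Notation cR := (real_complex R).
Local Notation adj M := (map_mx conjC (trmx M)).

Let sqmod (z : C) : R := complex.Re z ^+ 2 + complex.Im z ^+ 2.
Let csqnorm n (w : 'cV[C]_n) : R := \sum_i sqmod (w i 0).

Let sqmod_ge0 z : 0 <= sqmod z.
Proof. by rewrite addr_ge0 // sqr_ge0. Qed.

Let sqmodE z : (sqmod z)%:C = z^* * z.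
Proof. by rewrite /sqmod add_Re2_Im2 sqr_normc mulrC. Qed.

Let sqmod_real (a : R) : sqmod a%:C = a ^+ 2.
Proof. by rewrite /sqmod /= expr0n addr0. Qed.

Let csqnormE n (w : 'cV[C]_n) : (csqnorm w)%:C = (adj w *m w) 0 0.
Proof. by rewrite rmorph_sum mxE; apply: eq_bigr => i _; rewrite !mxE; exact: sqmodE. Qed.

Let csqnorm_eq0 n (w : 'cV[C]_n) : csqnorm w = 0 -> w = 0.
Proof.
move=> /eqP; rewrite psumr_eq0 => [/allP w0|i _]; last exact: sqmod_ge0.
apply/matrixP => i j; rewrite (ord1 j) mxE.
have := w0 i (mem_index_enum _); rewrite implyTb paddr_eq0 ?sqr_ge0 // !sqrf_eq0.
by case/andP => /eqP re /eqP im; rewrite [w i 0]complexE re im mulr0 addr0.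
Qed.

Let csqnorm_real n (x : 'cV[R]_n) : csqnorm (map_mx cR x) = sqnorm2 x.
Proof. by apply: eq_bigr => i _; rewrite mxE sqmod_real. Qed.

Let csqnorm_unitary n (P : 'M[C]_n) (z : 'cV[C]_n) :
  adj P *m P = 1%:M -> csqnorm (P *m z) = csqnorm z.
Proof.
move=> PtP; apply: complexI; rewrite !csqnormE trmx_mul map_mxM.
by rewrite -mulmxA (mulmxA (adj P)) PtP mul1mx.
Qed.

Lemma gram_eigenvalue_ge0 k n (B : 'M[R]_(k, n)) a :
  eigenvalue (B^T *m B) a -> 0 <= a.
Proof.
move=> /eigenvalueP [v vB v0].
have vv_gt0 : 0 < sqnorm2 v^T.
  rewrite lt_def sqnorm2_ge0 andbT; apply: contra v0 => /eqP/sqnorm2_eq0 v0.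
  by rewrite -[v]trmxK v0 trmx0.
(* [a |v|^2 = v B^T B v^T = |B v^T|^2] *)
have : a * sqnorm2 v^T = sqnorm2 (B *m v^T).
  have sqE m (w : 'cV[R]_m) : sqnorm2 w = (w^T *m w) 0 0.
    by rewrite mxE; apply: eq_bigr => i _; rewrite mxE expr2.
  by rewrite !sqE trmx_mul !trmxK mulmxA -(mulmxA v) vB -scalemxAl [RHS]mxE.
by move=> h; rewrite -(pmulr_lge0 _ vv_gt0) h sqnorm2_ge0.
Qed.

Let gram_spectral k n (B : 'M[R]_(k, n)) :
  exists (P : 'M[C]_n) (lam : 'I_n -> R),
  [/\ P *m adj P = 1%:M, adj P *m P = 1%:M,
      forall i, eigenvalue (B^T *m B) (lam i) &
      map_mx cR (B^T *m B) = adj P *m diag_mx (\row_i (lam i)%:C) *m P].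
Proof.
set Mc := map_mx cR (B^T *m B).
have herm : Mc \is hermsymmx.
  have Mc_sym : Mc^T = Mc by rewrite /Mc map_trmx trmx_mul trmxK.
  apply/is_hermitianmxP; rewrite expr0 scale1r Mc_sym; apply/matrixP => i j.
  by rewrite !mxE; apply/esym/conjc_real.
have /orthomx_spectralP Mdec := hermitian_normalmx herm.
set P := spectralmx Mc in Mdec; set sp := spectral_diag Mc in Mdec.
have Pu : P \is unitarymx := spectral_unitarymx Mc.
have PPt : P *m adj P = 1%:M by apply/unitarymxP.
have PtP : adj P *m P = 1%:M by rewrite -invmx_unitary // mulVmx // spectral_unit.
pose lam i := complex.Re (sp 0 i).
have spE : sp = \row_i (lam i)%:C.
  apply/rowP => i; rewrite mxE /lam RRe_real //.
  exact: (mxOverP (hermitian_spectral_diag_real herm) 0 i).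
rewrite invmx_unitary // spE in Mdec.
exists P, lam; split => // i.
(* row [i] of [P] is a left eigenvector of [Mc] for [lam i] *)
have eigc : eigenvalue Mc (lam i)%:C.
  have PMc : P *m Mc = diag_mx (\row_i (lam i)%:C) *m P.
    by rewrite {1}Mdec !mulmxA PPt mul1mx.
  apply/eigenvalueP; exists (row i P).
    by rewrite -row_mul PMc mul_diag_mx; apply/rowP => j; rewrite !mxE.
  apply/eqP => Pi0; have := congr1 (fun X : 'M[C]_n => X i i) PPt.
  rewrite !mxE eqxx big1 => [/eqP|j _]; first by rewrite eq_sym oner_eq0.
  by have := congr1 (fun X : 'rV[C]_n => X 0 j) Pi0; rewrite !mxE => ->; rewrite mul0r.
move: eigc; rewrite !eigenvalue_root_char -map_char_poly.
by rewrite fmorph_root.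
Qed.

Let gram_quadratic_form k n (B : 'M[R]_(k, n)) (P : 'M[C]_n) (lam : 'I_n -> R) :
  map_mx cR (B^T *m B) = adj P *m diag_mx (\row_i (lam i)%:C) *m P ->
  forall z : 'cV[C]_n, csqnorm (map_mx cR B *m z) = \sum_i lam i * sqmod ((P *m z) i 0).
Proof.
move=> BtB z; apply: complexI.
have adjB : adj (map_mx cR B) = map_mx cR B^T.
  by apply/matrixP => i j; rewrite !mxE; exact: conjc_real.
rewrite csqnormE trmx_mul map_mxM adjB -mulmxA (mulmxA (map_mx cR B^T)) -map_mxM BtB.
rewrite -!mulmxA !mulmxA -map_mxM -trmx_mul -(mulmxA _ P) -mulmxA mul_diag_mx.
rewrite mxE rmorph_sum; apply: eq_bigr => i _.
by rewrite !mxE rmorphM /= sqmodE mulrCA.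
Qed.

Lemma sqnorm2_mulmx_le k n (B : 'M[R]_(k, n)) (mu : R) :
  (forall a, eigenvalue (B^T *m B) a -> a <= mu) ->
  forall x, sqnorm2 (B *m x) <= mu * sqnorm2 x.
Proof.
move=> le_mu x; have [P [lam [_ PtP eig BtB]]] := gram_spectral B.
rewrite -csqnorm_real map_mxM (gram_quadratic_form BtB) -csqnorm_real.
rewrite -(csqnorm_unitary _ PtP) /csqnorm mulr_sumr; apply: ler_sum => i _.
by rewrite ler_wpM2r ?le_mu.
Qed.

Lemma min_norm_preimage k n (B : 'M[R]_(k, n)) (mu : R) : 0 <= mu ->
  (forall a, eigenvalue (B^T *m B) a -> a != 0 -> mu <= a) ->
  forall u, exists d, B *m d = B *m u /\ mu * sqnorm2 d <= sqnorm2 (B *m u).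
Proof.
move=> mu0 le_mu u; have [P [lam [PPt PtP eig BtB]]] := gram_spectral B.
have Q := gram_quadratic_form BtB.
(* kill the coordinates of [P u] along the kernel of [B^T B] *)
pose v := \col_i (if lam i == 0 then 0 else (P *m map_mx cR u) i 0).
pose dc := adj P *m v.
have Pdc : P *m dc = v by rewrite /dc mulmxA PPt mul1mx.
have Bdc : map_mx cR B *m dc = map_mx cR (B *m u).
  apply/eqP; rewrite map_mxM -subr_eq0 -mulmxBr; apply/eqP/csqnorm_eq0.
  rewrite Q big1 // => i _; rewrite mulmxBr Pdc !mxE.
  by case: eqP => [->|_]; rewrite ?mul0r // subrr sqmod_real expr0n mulr0.
exists (map_mx (@complex.Re R) dc); split.
  apply/matrixP => i j; have := congr1 (fun X : 'cV[C]_k => complex.Re (X i j)) Bdc.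
  rewrite !mxE /= => <-; rewrite raddf_sum; apply: eq_bigr => l _.
  by rewrite !mxE; case: (\sum_(_ < n) _) => a b /=; rewrite mul0r subr0.
have Re_le : sqnorm2 (map_mx (@complex.Re R) dc) <= csqnorm dc.
  by apply: ler_sum => i _; rewrite mxE lerDl sqr_ge0.
rewrite -[sqnorm2 (B *m u)]csqnorm_real -Bdc Q Pdc; apply: le_trans (ler_wpM2l mu0 Re_le) _.
rewrite -(csqnorm_unitary _ PtP) Pdc /csqnorm mulr_sumr; apply: ler_sum => i _.
rewrite mxE; case: eqP => [->|/eqP li0]; first by rewrite sqmod_real expr0n !mulr0.
by rewrite ler_wpM2r ?le_mu.
Qed.

Lemma gram_eigenvalue_neq0 k n (B : 'M[R]_(k, n)) : B != 0 ->
  exists2 a, eigenvalue (B^T *m B) a & a != 0.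
Proof.
move=> /eqP B0; apply: contrapT => no_eig; apply: B0.
have le0 a : eigenvalue (B^T *m B) a -> a <= 0.
  move=> eig_a; have [->//|a0] := eqVneq a 0.
  by exfalso; apply: no_eig; exists a.
apply/matrixP => i j; rewrite mxE.
have /sqnorm2_eq0/(congr1 (fun X : 'cV[R]_k => X i 0)) : sqnorm2 (B *m delta_mx j 0) = 0.
  apply/le_anti; rewrite sqnorm2_ge0 andbT.
  by have := sqnorm2_mulmx_le le0 (delta_mx j 0); rewrite mul0r.
by rewrite -colE !mxE.
Qed.

End GramSpectral.

Section SingularValues.
Variables (R : realType) (k n : nat) (B : 'M[R]_(k, n)).

Lemma singular_value_sqrt a :
  eigenvalue (B^T *m B) a -> singular_value B (Num.sqrt a).
Proof.
by move=> eig_a; split; rewrite ?sqrtr_ge0 // sqr_sqrtr // (gram_eigenvalue_ge0 eig_a).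
Qed.

Lemma singular_value_sqr_le s a : singular_value B s ->
  eigenvalue (B^T *m B) a -> s <= Num.sqrt a -> s ^+ 2 <= a.
Proof.
move=> [s0 _] eig_a le_sa.
by rewrite -ler_sqrt ?(gram_eigenvalue_ge0 eig_a) // sqrtr_sqr ger0_norm.
Qed.

Lemma singular_values_finite :
  [set s | singular_value B s] `<=`
  [set x | x \in map Num.sqrt (rootsR (char_poly (B^T *m B)))].
Proof.
move=> s [s0 eig_s] /=; rewrite -[s](ger0_norm s0) -sqrtr_sqr map_f //.
have := roots_on_rootsR (monic_neq0 (char_poly_monic (B^T *m B))) (s ^+ 2).
by rewrite in_itv /= -eigenvalue_root_char eig_s => <-.
Qed.

Lemma spec_norm_ge0 : 0 <= spec_norm B.
Proof.
have [[s sv_s]|no_sv] := pselect ([set s | singular_value B s] !=set0).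
  by have [[] ] := finite_set_sup singular_values_finite (ex_intro _ s sv_s).
rewrite /spec_norm (_ : [set s | _] = set0) ?sup0 //.
by apply/seteqP; split => // s sv_s; apply: no_sv; exists s.
Qed.

Lemma norm2_mulmx_le x : norm2 (B *m x) <= spec_norm B * norm2 x.
Proof.
have sB0 := spec_norm_ge0.
have eig_le a : eigenvalue (B^T *m B) a -> a <= spec_norm B ^+ 2.
  move=> eig_a; have sv := singular_value_sqrt eig_a.
  have [_ ub] := finite_set_sup singular_values_finite (ex_intro _ _ sv).
  by rewrite -ler_sqrt ?sqr_ge0 // sqrtr_sqr ger0_norm //; exact: ub.
rewrite (mul_norm2 _ sB0) norm2E ler_sqrt ?mulr_ge0 ?sqr_ge0 ?sqnorm2_ge0 //.
exact: sqnorm2_mulmx_le.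
Qed.

Hypothesis B_neq0 : B != 0.

Let nonzero_sv_spec :
  [set s | singular_value B s /\ s != 0] (sigma_min B) /\
  lbound [set s | singular_value B s /\ s != 0] (sigma_min B).
Proof.
apply: (finite_set_inf (s := map Num.sqrt (rootsR (char_poly (B^T *m B))))).
  by move=> s [sv_s _]; exact: singular_values_finite.
have [a eig_a a0] := gram_eigenvalue_neq0 B_neq0.
exists (Num.sqrt a); split; first exact: singular_value_sqrt.
by rewrite sqrtr_eq0 -ltNge lt_def a0 (gram_eigenvalue_ge0 eig_a).
Qed.

Lemma sigma_min_gt0 : 0 < sigma_min B.
Proof. by have [[[s0 _] s_neq0] _] := nonzero_sv_spec; rewrite lt_def s_neq0. Qed.

Lemma sigma_min_preimage u :
  exists d, B *m d = B *m u /\ sigma_min B ^+ 2 * sqnorm2 d <= sqnorm2 (B *m u).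
Proof.
apply: min_norm_preimage; first by rewrite sqr_ge0.
move=> a eig_a a0; have [[sv _] lb] := nonzero_sv_spec.
apply: (singular_value_sqr_le sv eig_a); apply: lb; split.
  exact: singular_value_sqrt.
by rewrite sqrtr_eq0 -ltNge lt_def a0 (gram_eigenvalue_ge0 eig_a).
Qed.

End SingularValues.

Section Blocks.
Variable R : realType.

Lemma blk_divK m p (i : 'I_m) (j : 'I_p) : blk_div (blk_idx i j) = i.
Proof.
apply: val_inj => /=; have p_gt0 : (0 < p)%N by case: j => j /=; lia.
by rewrite divnMDl // divn_small // addn0.
Qed.

Lemma blk_modK m p (i : 'I_m) (j : 'I_p) : blk_mod (blk_idx i j) = j.
Proof. by apply: val_inj => /=; rewrite modnMDl modn_small. Qed.

Lemma blk_idxK m p (k : 'I_(m * p)) : blk_idx (blk_div k) (blk_mod k) = k.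
Proof. by apply: val_inj => /=; rewrite -divn_eq. Qed.

Lemma big_blocks m p (F : 'I_(m * p) -> R) :
  \sum_k F k = \sum_(i < m) \sum_(j < p) F (blk_idx i j).
Proof.
rewrite pair_big /= (reindex (fun ij : 'I_m * 'I_p => blk_idx ij.1 ij.2)) //=.
exists (fun k => (blk_div k, blk_mod k)) => [[i j] _|k _] /=.
  by rewrite blk_divK blk_modK.
exact: blk_idxK.
Qed.

Lemma sqnorm2_blocks m p (z : 'cV[R]_(m * p)) :
  sqnorm2 z = \sum_i norm2 (block z i) ^+ 2.
Proof.
rewrite /sqnorm2 big_blocks; apply: eq_bigr => i _.
by rewrite norm2_sqr; apply: eq_bigr => j _; rewrite mxE.
Qed.

Lemma blockD m p (z w : 'cV[R]_(m * p)) i : block (z + w) i = block z i + block w i.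
Proof. by apply/matrixP => j k; rewrite !mxE. Qed.

Lemma blockZ m p a (z : 'cV[R]_(m * p)) i : block (a *: z) i = a *: block z i.
Proof. by apply/matrixP => j k; rewrite !mxE. Qed.

Lemma blockN m p (z : 'cV[R]_(m * p)) i : block (- z) i = - block z i.
Proof. by apply/matrixP => j k; rewrite !mxE. Qed.

Definition restrict_blocks m p (Lam : {set 'I_m}) (z : 'cV[R]_(m * p)) : 'cV[R]_(m * p) :=
  \col_k (if blk_div k \in Lam then z k 0 else 0).

Lemma block_restrict_blocks m p Lam (z : 'cV[R]_(m * p)) i :
  block (restrict_blocks Lam z) i = if i \in Lam then block z i else 0.
Proof.
by apply/matrixP => j k; rewrite !mxE blk_divK; case: ifP => _; rewrite ?mxE.
Qed.

Lemma sqnorm2_restrict_blocks m p Lam (z : 'cV[R]_(m * p)) :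
  sqnorm2 (restrict_blocks Lam z) = \sum_(i in Lam) norm2 (block z i) ^+ 2.
Proof.
rewrite sqnorm2_blocks [RHS]big_mkcond; apply: eq_bigr => i _.
rewrite block_restrict_blocks; case: ifP => // _.
by rewrite norm2_sqr /sqnorm2 big1 // => j _; rewrite mxE expr0n.
Qed.

Section SubBlocks.
Variables (m p n : nat) (D : 'M[R]_(m * p, n)) (Lam : {set 'I_m}).

Lemma subblocks_mulmxE (v : 'cV[R]_n) r :
  (subblocks D Lam *m v) r 0 = (D *m v) (blk_idx (enum_val (blk_div r)) (blk_mod r)) 0.
Proof. by rewrite !mxE; apply: eq_bigr => j _; rewrite mxE. Qed.

Lemma sqnorm2_subblocks_mulmx (v : 'cV[R]_n) :
  sqnorm2 (subblocks D Lam *m v) = \sum_(i in Lam) norm2 (block (D *m v) i) ^+ 2.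
Proof.
rewrite /sqnorm2 big_blocks [RHS]big_enum_val; apply: eq_bigr => i _.
rewrite norm2_sqr; apply: eq_bigr => j _.
by rewrite subblocks_mulmxE blk_divK blk_modK [in RHS]mxE.
Qed.

Lemma subblocks_mulmx_eq (d u : 'cV[R]_n) :
  subblocks D Lam *m d = subblocks D Lam *m u ->
  {in Lam, forall i, block (D *m d) i = block (D *m u) i}.
Proof.
move=> eq_du i iLam; apply/matrixP => j k; rewrite (ord1 k) !mxE.
have := congr1 (fun X : 'cV[R]_(#|Lam| * p) => X (blk_idx (enum_rank_in iLam i) j) 0) eq_du.
by rewrite /= !subblocks_mulmxE blk_divK blk_modK enum_rankK_in // !mxE => ->.
Qed.

End SubBlocks.
End Blocks.

Section TrimmedNorm.
Variables (R : realType) (K m p : nat).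
Implicit Types (z w : 'cV[R]_(m * p)) (Lam : {set 'I_m}).

Lemma exists_set_card k : (k <= m)%N -> exists Lam : {set 'I_m}, #|Lam| = k.
Proof.
move=> km; exists [set widen_ord km i | i : 'I_k].
by rewrite card_imset ?card_ord // => i j /(congr1 val) /= /val_inj.
Qed.

Let trimmed_spec z :
  let S := [set t : R | exists Lam : {set 'I_m},
              #|Lam| = (m - K)%N /\ t = \sum_(i in Lam) norm2 (block z i)] in
  S (inf S) /\ lbound S (inf S).
Proof.
move=> S; apply: (finite_set_inf (s := [seq \sum_(i in Lam) norm2 (block z i)
                                       | Lam <- enum [set: {set 'I_m}]])).
  by move=> _ [Lam [_ ->]]; rewrite /= map_f // mem_enum inE.
have [Lam cardLam] := exists_set_card (leq_subr K m).
by exists (\sum_(i in Lam) norm2 (block z i)), Lam.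
Qed.

Lemma trimmed_attained z : exists2 Lam : {set 'I_m}, #|Lam| = (m - K)%N &
  trimmed K m p z = \sum_(i in Lam) norm2 (block z i).
Proof. by have [[Lam []]] := trimmed_spec z; exists Lam. Qed.

Lemma trimmed_le_sum z Lam : #|Lam| = (m - K)%N ->
  trimmed K m p z <= \sum_(i in Lam) norm2 (block z i).
Proof. by move=> cardLam; have [_] := trimmed_spec z; apply; exists Lam. Qed.

Lemma trimmed_ge0 z : 0 <= trimmed K m p z.
Proof.
by have [Lam _ ->] := trimmed_attained z; apply: sumr_ge0 => i _; exact: norm2_ge0.
Qed.

Lemma trimmedZ_le a z : 0 <= a -> trimmed K m p (a *: z) <= a * trimmed K m p z.
Proof.
move=> a0; have [Lam cardLam ->] := trimmed_attained z.
apply: le_trans (trimmed_le_sum _ cardLam) _; rewrite mulr_sumr.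
by apply: ler_sum => i _; rewrite blockZ norm2Z ger0_norm.
Qed.

Lemma trimmed_shrink z w Lam t : #|Lam| = (m - K)%N ->
  trimmed K m p z = \sum_(i in Lam) norm2 (block z i) ->
  {in Lam, forall i, block w i = - block z i} -> 0 <= t -> t <= 1 ->
  trimmed K m p (z + t *: w) <= (1 - t) * trimmed K m p z.
Proof.
move=> cardLam Tz wz t0 t1; apply: le_trans (trimmed_le_sum _ cardLam) _.
rewrite Tz mulr_sumr; apply: ler_sum => i iLam.
rewrite blockD blockZ wz // scalerN -{1}(scale1r (block z i)) -scalerBl.
by rewrite norm2Z ger0_norm // subr_ge0.
Qed.

End TrimmedNorm.

Section SigmaKDescent.
Variables (R : realType) (K m p n : nat) (D : 'M[R]_(m * p, n)) (c : 'cV[R]_(m * p)).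
Variables (xbar x : 'cV[R]_n) (Lam : {set 'I_m}).
Hypotheses (D_neq0 : D != 0) (Dxbar : D *m xbar = c) (cardLam : #|Lam| = (m - K)%N).

Let z := D *m x - c.

Let surjective_descent : \rank D = (m * p)%N ->
  exists d, {in Lam, forall i, block (D *m d) i = - block z i} /\
    sigmaK K m p n D ^+ 2 * sqnorm2 d <= \sum_(i in Lam) norm2 (block z i) ^+ 2.
Proof.
move=> rankD; rewrite /sigmaK rankD eqxx.
have [X DX] : exists X, D *m X = restrict_blocks Lam (- z).
  have : ((restrict_blocks Lam (- z))^T <= D^T)%MS.
    by apply: submx_full; rewrite /row_full mxrank_tr rankD.
  by case/submxP => Y eqY; exists Y^T; rewrite -[RHS]trmxK eqY trmx_mul trmxK.
have [d [Dd le_d]] := sigma_min_preimage D_neq0 X.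
exists d; rewrite Dd DX; split.
  by move=> i iLam; rewrite block_restrict_blocks iLam blockN.
apply: le_trans le_d _; rewrite DX sqnorm2_restrict_blocks.
by apply: ler_sum => i _; rewrite blockN norm2N.
Qed.

Let subblocks_descent : \rank D != (m * p)%N ->
  0 < \sum_(i in Lam) norm2 (block z i) ->
  exists d, [/\ 0 < sigmaK K m p n D, {in Lam, forall i, block (D *m d) i = - block z i} &
    sigmaK K m p n D ^+ 2 * sqnorm2 d <= \sum_(i in Lam) norm2 (block z i) ^+ 2].
Proof.
move=> rankD zLam_gt0; rewrite /sigmaK (negbTE rankD).
set B := subblocks D Lam; set u := xbar - x.
have Du : D *m u = - z by rewrite mulmxBr Dxbar opprB.
have Bu : sqnorm2 (B *m u) = \sum_(i in Lam) norm2 (block z i) ^+ 2.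
  by rewrite sqnorm2_subblocks_mulmx Du; apply: eq_bigr => i _; rewrite blockN norm2N.
have B_neq0 : B != 0.
  apply: contraTneq zLam_gt0 => B0.
  have /eqP : \sum_(i in Lam) norm2 (block z i) ^+ 2 = 0.
    by rewrite -Bu B0 mul0mx /sqnorm2 big1 // => i _; rewrite mxE expr0n.
  rewrite psumr_eq0 => [/allP z0|i _]; last exact: sqr_ge0.
  rewrite big1 ?ltxx // => i iLam.
  by have := z0 i (mem_index_enum _); rewrite iLam implyTb sqrf_eq0 => /eqP.
set S := [set s | exists L : {set 'I_m},
  [/\ #|L| = (m - K)%N, subblocks D L != 0 & s = sigma_min (subblocks D L)]].
have [[L [_ L_neq0 ->]] lbS] : S (inf S) /\ lbound S (inf S).
  apply: (finite_set_inf (s := [seq sigma_min (subblocks D L) | L <- enum [set: {set 'I_m}]])).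
    move=> _ [L [_ _ ->]] /=.
    by apply: (map_f (fun L => sigma_min (subblocks D L))); rewrite mem_enum inE.
  by exists (sigma_min B), Lam.
have [d [Bd le_d]] := sigma_min_preimage B_neq0 u.
exists d; split; first exact: sigma_min_gt0.
  by move=> i iLam; rewrite (subblocks_mulmx_eq Bd iLam) Du blockN.
have le_sL : sigma_min (subblocks D L) <= sigma_min B by apply: lbS; exists Lam.
have sL0 := ltW (sigma_min_gt0 L_neq0).
by rewrite -Bu; apply: le_trans le_d; rewrite ler_wpM2r ?sqnorm2_ge0 // !expr2 ler_pM.
Qed.

Lemma sigmaK_descent : 0 < \sum_(i in Lam) norm2 (block z i) ->
  exists d, [/\ 0 < sigmaK K m p n D, {in Lam, forall i, block (D *m d) i = - block z i} &
    sigmaK K m p n D ^+ 2 * sqnorm2 d <= \sum_(i in Lam) norm2 (block z i) ^+ 2].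
Proof.
have [rankD|rankD] := eqVneq (\rank D) (m * p)%N; last exact: subblocks_descent.
move=> _; have [d [Dd le_d]] := surjective_descent rankD.
by exists d; split; rewrite // /sigmaK rankD eqxx sigma_min_gt0.
Qed.

End SigmaKDescent.

Lemma trimmed_descent_direction (R : realType) K m p n (D : 'M[R]_(m * p, n)) c xbar x :
  D != 0 -> D *m xbar = c -> 0 < trimmed K m p (D *m x - c) ->
  exists d : 'cV[R]_n, [/\ 0 < sigmaK K m p n D,
    forall t, 0 <= t -> t <= 1 ->
      trimmed K m p (D *m (x + t *: d) - c) <= (1 - t) * trimmed K m p (D *m x - c) &
    sigmaK K m p n D * norm2 d <= trimmed K m p (D *m x - c)].
Proof.
set z := D *m x - c => D_neq0 Dxbar T_gt0.
have [Lam cardLam Tz] := trimmed_attained K z.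
have [|d [sK_gt0 Ddz le_d]] := sigmaK_descent (x := x) D_neq0 Dxbar cardLam; first by rewrite -Tz.
exists d; split => // [t t0 t1|].
  have -> : D *m (x + t *: d) - c = z + t *: (D *m d).
    by rewrite mulmxDr -scalemxAr addrAC.
  exact: (trimmed_shrink cardLam Tz Ddz t0 t1).
rewrite Tz (mul_norm2 _ (ltW sK_gt0)); apply: le_trans (sqrt_sum_sqr_le _ _) => //.
  by rewrite ler_sqrt // sumr_ge0 // => i _; rewrite sqr_ge0.
by move=> i; exact: norm2_ge0.
Qed.

Section Stationarity.
Variable R : realType.

Lemma cvg_le_affine (Q : R -> R) v a B :
  Q t @[t --> 0^'+] --> v -> (forall t, 0 < t -> t <= 1 -> Q t <= a + t * B) -> v <= a.
Proof.
move=> Qv le_Q.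
have affine_cvg : (fun t => a + t * B) t @[t --> 0^'+] --> a.
  rewrite -[X in _ --> X](addr0 a) -[X in a + X](mul0r B).
  apply: cvgD; first exact: cvg_cst.
  by apply: cvgM; [exact: cvg_at_right_filter cvg_id | exact: cvg_cst].
apply: (ler_cvg_to Qv affine_cvg); near=> t; apply: le_Q.
  by near: t; exact: nbhs_right_gt.
by near: t; apply: nbhs_right_ltW; exact: ltr01.
Unshelve. all: by end_near.
Qed.

Lemma dstationary_slope_ge0 L n0 (n : 'I_L -> nat)
    (Phi : 'cV[R]_n0 -> (forall l : 'I_L, 'cV[R]_(n l)) -> R) x0 xs d0 ds a B :
  dstationary Phi x0 xs ->
  (forall t, 0 < t -> t <= 1 ->
    Phi (x0 + t *: d0) (fun l => xs l + t *: ds l) - Phi x0 xs <= t * (a + t * B)) ->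
  0 <= a.
Proof.
move=> stat le_Phi; have [v Phi_v v0] := stat d0 ds.
apply: le_trans v0 (cvg_le_affine Phi_v _) => t t0 t1.
by rewrite ler_pdivrMr // [X in _ <= X]mulrC; exact: le_Phi.
Qed.

Lemma sum_weighted_decrease (I : finType) (w F G : I -> R) i (delta : R) :
  (forall k, 0 <= w k) -> (forall k, G k <= F k) -> G i <= F i - delta ->
  \sum_k w k * (G k - F k) <= - (w i * delta).
Proof.
move=> w0 GF Gi; rewrite (bigD1 i) //= -[X in _ <= X]addr0 lerD //.
  by rewrite -mulrN ler_wpM2l //; lra.
by apply: sumr_le0 => k _; rewrite mulr_ge0_le0 // subr_le0.
Qed.

Lemma sumr_mulrBr (I : finType) (w F G : I -> R) :
  \sum_i w i * (G i - F i) = \sum_i w i * G i - \sum_i w i * F i.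
Proof. by rewrite -sumrB; apply: eq_bigr => i _; rewrite mulrBr. Qed.

Lemma half_sqnorm2_increment q t (r w : 'cV[R]_q) :
  2^-1 * norm2 (r - t *: w) ^+ 2 - 2^-1 * norm2 r ^+ 2 =
  t * (- dotv r w + t * (2^-1 * sqnorm2 w)).
Proof. by rewrite !norm2_sqr sqnorm2_subZ; field. Qed.

End Stationarity.

Section LeastSquaresTrimmedLasso.
Variables (R : realType) (L n0 q : nat) (n m p K : 'I_L -> nat) (gamma : 'I_L -> R).
Variables (c : forall l, 'cV[R]_(m l * p l)) (D : forall l, 'M[R]_(m l * p l, n l)).
Variables (b : 'cV[R]_q) (A0 : 'M[R]_(q, n0)) (A : forall l, 'M[R]_(q, n l)).
Variables (xbar : forall l, 'cV[R]_(n l)) (x0 : 'cV[R]_n0) (xs : forall l, 'cV[R]_(n l)).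
Hypotheses (gamma_gt0 : forall l, 0 < gamma l) (D_neq0 : forall l, D l != 0).
Hypothesis Dxbar : forall l, D l *m xbar l = c l.

Let T l (v : 'cV[R]_(n l)) := trimmed (K l) (m l) (p l) (D l *m v - c l).

Let objective (y0 : 'cV[R]_n0) (ys : forall l, 'cV[R]_(n l)) :=
  2^-1 * norm2 (b - (A0 *m y0 + \sum_l A l *m ys l)) ^+ 2 + \sum_l gamma l * T (ys l).

Hypothesis stationary : dstationary objective x0 xs.

Let r := b - (A0 *m x0 + \sum_l A l *m xs l).
Let rbar := b - \sum_l A l *m xbar l.

Let first_order (d0 : 'cV[R]_n0) (ds : forall l, 'cV[R]_(n l)) a :
  (forall t, 0 < t -> t <= 1 ->
    \sum_l gamma l * (T (xs l + t *: ds l) - T (xs l)) <= t * a) ->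
  0 <= - dotv r (A0 *m d0 + \sum_l A l *m ds l) + a.
Proof.
set w := A0 *m d0 + _ => le_pen.
apply: (dstationary_slope_ge0 (d0 := d0) (ds := ds) (B := 2^-1 * sqnorm2 w) stationary) => t t0 t1.
rewrite /objective /=.
have -> : b - (A0 *m (x0 + t *: d0) + \sum_l A l *m (xs l + t *: ds l)) = r - t *: w.
  rewrite mulmxDr (eq_bigr (fun l => A l *m xs l + t *: (A l *m ds l))) => [|l _].
    rewrite big_split /= -scalemxAr -scaler_sumr /r /w.
    set S := \sum_l A l *m xs l; set S' := \sum_l A l *m ds l.
    by apply/matrixP => i j; rewrite !mxE; lra.
  by rewrite mulmxDr scalemxAr.
have := le_pen t t0 t1; rewrite sumr_mulrBr.
by have := half_sqnorm2_increment t r w; lra.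
Qed.

Let T_ge0 l (v : 'cV[R]_(n l)) : 0 <= T v.
Proof. exact: trimmed_ge0. Qed.

(* Moving every block towards [xbar] scales all the trimmed norms by [1 - t]. *)
Lemma residual_lt_reference l : 0 < T (xs l) -> norm2 r < norm2 rbar.
Proof.
move=> T_gt0; rewrite ltNge; apply/negP => le_r.
have := @first_order (- x0) (fun k => xbar k - xs k) (- (gamma l * T (xs l))).
have -> : A0 *m - x0 + \sum_k A k *m (xbar k - xs k) = r - rbar.
  under eq_bigr => k _ do rewrite mulmxBr.
  rewrite sumrB mulmxN /r /rbar.
  set S := \sum_k A k *m xs k; set Sbar := \sum_k A k *m xbar k.
  by apply/matrixP => i j; rewrite !mxE; lra.
have dot_le : - dotv r (r - rbar) <= 0.
  have := dotv_le r rbar; have := norm2_ge0 r.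
  by rewrite dotvBr -norm2_sqr; nra.
have T_gt0' : 0 < gamma l * T (xs l) by rewrite mulr_gt0.
have pen t : 0 < t -> t <= 1 ->
    \sum_k gamma k * (T (xs k + t *: (xbar k - xs k)) - T (xs k)) <= t * - (gamma l * T (xs l)).
  move=> t0 t1; have shrink k : T (xs k + t *: (xbar k - xs k)) <= (1 - t) * T (xs k).
    rewrite /T mulmxDr -scalemxAr mulmxBr Dxbar.
    have -> : D k *m xs k + t *: (c k - D k *m xs k) - c k = (1 - t) *: (D k *m xs k - c k).
      set Dx := D k *m xs k.
      by apply/matrixP => i j; rewrite !mxE; lra.
    by apply: trimmedZ_le; lra.
  rewrite mulrN -mulrCA; apply: sum_weighted_decrease => [k|k|].
  - exact: ltW.
  - by apply: le_trans (shrink k) _; rewrite ler_piMl ?T_ge0 //; lra.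
  - by apply: le_trans (shrink l) _; lra.
by move=> /(_ pen); lra.
Qed.

Lemma gamma_le_residual l : 0 < T (xs l) ->
  gamma l <= (sigmaK (K l) (m l) (p l) (n l) (D l))^-1 * spec_norm (A l) * norm2 r.
Proof.
move=> T_gt0; set sK := sigmaK _ _ _ _ _.
have [d [sK_gt0 Td le_d]] := trimmed_descent_direction (D_neq0 l) (Dxbar l) T_gt0.
pose ds := @dfwith _ _ (fun k => 0 : 'cV[R]_(n k)) l d.
have := @first_order 0 ds (- (gamma l * T (xs l))).
have -> : A0 *m 0 + \sum_k A k *m ds k = A l *m d.
  rewrite mulmx0 add0r (bigD1 l) //= big1 ?addr0 /ds ?dfwithin // => k kl.
  by rewrite dfwithout 1?eq_sym // mulmx0.
have pen t : 0 < t -> t <= 1 ->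
    \sum_k gamma k * (T (xs k + t *: ds k) - T (xs k)) <= t * - (gamma l * T (xs l)).
  move=> t0 t1; rewrite mulrN -mulrCA; apply: sum_weighted_decrease => [k|k|].
  - exact: ltW.
  - rewrite /ds; case: dfwithP => [|k' _]; last by rewrite scaler0 addr0.
    by apply: le_trans (Td _ (ltW t0) t1) _; rewrite ler_piMl ?T_ge0 //; lra.
  - by rewrite /ds dfwithin; apply: le_trans (Td _ (ltW t0) t1) _; lra.
move=> /(_ pen); rewrite -dotvNl => slope.
have : dotv (- r) (A l *m d) <= norm2 r * (spec_norm (A l) * (sK^-1 * T (xs l))).
  apply: le_trans (dotv_le _ _) _; rewrite norm2N ler_wpM2l ?norm2_ge0 //.
  apply: le_trans (norm2_mulmx_le _ _) _; rewrite ler_wpM2l ?spec_norm_ge0 //.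
  by rewrite ler_pdivlMl.
rewrite -(ler_pM2r T_gt0) => le_dot.
suff : gamma l * T (xs l) <= sK^-1 * spec_norm (A l) * norm2 r * T (xs l).
  by rewrite ler_pM2r.
by apply: le_trans (_ : _ <= dotv (- r) (A l *m d)) _; [lra | nra].
Qed.

Hypothesis gamma_gt_bound : forall l,
  (sigmaK (K l) (m l) (p l) (n l) (D l))^-1 * spec_norm (A l) * norm2 rbar < gamma l.

Lemma trimmed_lasso_dstationary_feasible l : T (xs l) = 0.
Proof.
apply/eqP; rewrite eq_le trimmed_ge0 andbT leNgt; apply/negP => T_gt0.
have [_ [sK_gt0 _ _]] := trimmed_descent_direction (D_neq0 l) (Dxbar l) T_gt0.
have s_ge0 : 0 <= (sigmaK (K l) (m l) (p l) (n l) (D l))^-1 * spec_norm (A l).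
  by rewrite mulr_ge0 ?spec_norm_ge0 // invr_ge0 ltW.
have := gamma_gt_bound l; have := gamma_le_residual T_gt0.
have := residual_lt_reference T_gt0; nra.
Qed.

End LeastSquaresTrimmedLasso.

Section CoordinateBlocks.
Variable R : realType.

(* The statement writes part (b) with [D_l = I] and [p_l = 1]: each coordinate is a block. *)
Definition coord_blocks k (v : 'cV[R]_k) : 'cV[R]_(k * 1) :=
  castmx (esym (muln1 k), erefl) (1%:M *m v) - 0.

Lemma coord_blocksE k (v : 'cV[R]_k) i : block (coord_blocks v) i = (v i 0)%:M.
Proof.
apply/matrixP => j j'; rewrite !(ord1 j) !(ord1 j') !mxE castmxE mul1mx subr0 /=.
by congr (v _ _); apply: val_inj => /=; lia.
Qed.

Lemma norm2_scalar_mx (a : R) : norm2 (a%:M : 'cV[R]_1) = `|a|.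
Proof. by rewrite norm2E /sqnorm2 big_ord1 mxE sqrtr_sqr. Qed.

Lemma coord_blocksD k (v w : 'cV[R]_k) : coord_blocks (v + w) = coord_blocks v + coord_blocks w.
Proof. by apply/matrixP => i j; rewrite !mxE !castmxE !mul1mx !mxE !subr0. Qed.

Lemma coord_blocksZ k a (v : 'cV[R]_k) : coord_blocks (a *: v) = a *: coord_blocks v.
Proof. by apply/matrixP => i j; rewrite !mxE !castmxE !mul1mx !mxE !subr0. Qed.

Lemma sum_norm2_coord_blocks k (v : 'cV[R]_k) (P : pred 'I_k) :
  \sum_(i | P i) norm2 (block (coord_blocks v) i) = \sum_(i | P i) `|v i 0|.
Proof. by apply: eq_bigr => i _; rewrite coord_blocksE norm2_scalar_mx. Qed.

End CoordinateBlocks.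

Section LeastSquaresL1TrimmedLasso.
Variables (R : realType) (L q : nat) (n K : 'I_L -> nat) (gamma eta : 'I_L -> R).
Variables (b : 'cV[R]_q) (A : forall l, 'M[R]_(q, n l)) (x0 : 'cV[R]_0).
Variable xs : forall l, 'cV[R]_(n l).
Hypotheses (gamma_gt0 : forall l, 0 < gamma l) (eta_ge0 : forall l, 0 <= eta l).

Let T l (v : 'cV[R]_(n l)) := trimmed (K l) (n l) 1 (coord_blocks v).
Let M l := \big[Num.max/0]_(j < n l) norm2 (col j (A l)).

Let objective (y0 : 'cV[R]_0) (ys : forall l, 'cV[R]_(n l)) :=
  2^-1 * norm2 (b - \sum_l A l *m ys l) ^+ 2 + \sum_l eta l * norm1 (ys l)
  + \sum_l gamma l * T (ys l).

Hypothesis stationary : dstationary objective x0 xs.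

Let r := b - \sum_l A l *m xs l.

Let first_order (ds : forall l, 'cV[R]_(n l)) a :
  (forall t, 0 < t -> t <= 1 ->
    \sum_l eta l * (norm1 (xs l + t *: ds l) - norm1 (xs l))
    + \sum_l gamma l * (T (xs l + t *: ds l) - T (xs l)) <= t * a) ->
  0 <= - dotv r (\sum_l A l *m ds l) + a.
Proof.
set w := \sum_l A l *m ds l => le_pen.
apply: (dstationary_slope_ge0 (d0 := 0) (ds := ds) (B := 2^-1 * sqnorm2 w) stationary).
move=> t t0 t1; rewrite /objective /=.
have -> : b - \sum_l A l *m (xs l + t *: ds l) = r - t *: w.
  under eq_bigr => l _ do rewrite mulmxDr -scalemxAr.
  rewrite big_split /= -scaler_sumr /r /w.
  set S := \sum_l A l *m xs l; set S' := \sum_l A l *m ds l.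
  by apply/matrixP => i j; rewrite !mxE; lra.
have := le_pen t t0 t1; rewrite !sumr_mulrBr.
by have := half_sqnorm2_increment t r w; lra.
Qed.

Let norm1_shrink k (v : 'cV[R]_k) t : t <= 1 -> norm1 (v + t *: - v) = (1 - t) * norm1 v.
Proof.
move=> t1; rewrite /norm1 mulr_sumr; apply: eq_bigr => i _; rewrite !mxE.
by rewrite mulrN -{1}[v i 0]mul1r -mulrBl normrM ger0_norm // subr_ge0.
Qed.

Let T_ge0 l (v : 'cV[R]_(n l)) : 0 <= T v.
Proof. exact: trimmed_ge0. Qed.

Lemma l1_residual_lt_observation l : 0 < T (xs l) -> norm2 r < norm2 b.
Proof.
move=> T_gt0; rewrite ltNge; apply/negP => le_r.
have := @first_order (fun k => - xs k) (- (gamma l * T (xs l))).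
have -> : \sum_k A k *m - xs k = r - b.
  under eq_bigr => k _ do rewrite mulmxN.
  rewrite sumrN /r; set S := \sum_k A k *m xs k.
  by apply/matrixP => i j; rewrite !mxE; lra.
have dot_le : - dotv r (r - b) <= 0.
  by have := dotv_le r b; have := norm2_ge0 r; rewrite dotvBr -norm2_sqr; nra.
have pen t : 0 < t -> t <= 1 ->
    \sum_k eta k * (norm1 (xs k + t *: - xs k) - norm1 (xs k))
    + \sum_k gamma k * (T (xs k + t *: - xs k) - T (xs k)) <= t * - (gamma l * T (xs l)).
  move=> t0 t1; have shrink k : T (xs k + t *: - xs k) <= (1 - t) * T (xs k).
    rewrite /T (_ : xs k + t *: - xs k = (1 - t) *: xs k) ?coord_blocksZ.
      by apply: trimmedZ_le; lra.
    by rewrite scalerN scalerBl scale1r.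
  rewrite -[X in _ <= X]add0r; apply: lerD.
    apply: sumr_le0 => k _; rewrite mulr_ge0_le0 // subr_le0 norm1_shrink //.
    by rewrite ler_piMl ?norm1_ge0 //; lra.
  rewrite mulrN -mulrCA; apply: sum_weighted_decrease => [k|k|].
  - exact: ltW.
  - by apply: le_trans (shrink k) _; rewrite ler_piMl ?T_ge0 //; lra.
  - by apply: le_trans (shrink l) _; lra.
by move=> /(_ pen); have := mulr_gt0 (gamma_gt0 l) T_gt0; lra.
Qed.

Lemma l1_gamma_le_residual l : 0 < T (xs l) -> gamma l <= M l * norm2 r - eta l.
Proof.
move=> T_gt0; have [Lam cardLam TLam] := trimmed_attained (K l) (coord_blocks (xs l)).
pose d := \col_j (if j \in Lam then - xs l j 0 else 0).
have norm1_d : norm1 d = T (xs l).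
  rewrite /T TLam sum_norm2_coord_blocks /norm1 [RHS]big_mkcond; apply: eq_bigr => j _.
  by rewrite mxE; case: ifP; rewrite ?normrN ?normr0.
have norm1_step t : 0 <= t -> t <= 1 ->
    norm1 (xs l + t *: d) = norm1 (xs l) - t * T (xs l).
  move=> t0 t1; rewrite -norm1_d /norm1 mulr_sumr -sumrB; apply: eq_bigr => j _.
  rewrite !mxE; case: ifP => _; last by rewrite normr0 !mulr0 addr0 subr0.
  rewrite normrN mulrN -{1}[xs l j 0]mul1r -mulrBl normrM ger0_norm ?subr_ge0 //.
  by rewrite mulrBl mul1r.
have T_step t : 0 <= t -> t <= 1 -> T (xs l + t *: d) <= (1 - t) * T (xs l).
  move=> t0 t1; rewrite /T coord_blocksD coord_blocksZ.
  apply: (trimmed_shrink cardLam TLam) => // i iLam.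
  by rewrite !coord_blocksE mxE iLam raddfN.
pose ds := @dfwith _ _ (fun k => 0 : 'cV[R]_(n k)) l d.
have := @first_order ds (- ((eta l + gamma l) * T (xs l))).
have -> : \sum_k A k *m ds k = A l *m d.
  rewrite (bigD1 l) //= big1 ?addr0 /ds ?dfwithin // => k kl.
  by rewrite dfwithout 1?eq_sym // mulmx0.
have pen t : 0 < t -> t <= 1 ->
    \sum_k eta k * (norm1 (xs k + t *: ds k) - norm1 (xs k))
    + \sum_k gamma k * (T (xs k + t *: ds k) - T (xs k))
    <= t * - ((eta l + gamma l) * T (xs l)).
  move=> t0 t1; have tT_ge0 := mulr_ge0 (ltW t0) (T_ge0 (xs l)).
  rewrite mulrN mulrDl mulrDr opprD; apply: lerD; rewrite -mulrCA.
    apply: sum_weighted_decrease => [k|k|].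
    - exact: eta_ge0.
    - rewrite /ds; case: dfwithP => [|k' _]; last by rewrite scaler0 addr0.
      by rewrite norm1_step ?(ltW t0) //; lra.
    - by rewrite /ds dfwithin norm1_step ?(ltW t0).
  apply: sum_weighted_decrease => [k|k|].
  - exact: ltW.
  - rewrite /ds; case: dfwithP => [|k' _]; last by rewrite scaler0 addr0.
    by apply: le_trans (T_step _ (ltW t0) t1) _; rewrite ler_piMl ?T_ge0 //; lra.
  - by rewrite /ds dfwithin; apply: le_trans (T_step _ (ltW t0) t1) _; lra.
move=> /(_ pen) slope.
have := normr_dotv_mulmx_le r (A l) d; rewrite norm1_d -/(M l) => le_dot.
have dot_le : - dotv r (A l *m d) <= `|dotv r (A l *m d)| by rewrite -normrN ler_norm.
suff : gamma l * T (xs l) <= (M l * norm2 r - eta l) * T (xs l) by rewrite ler_pM2r.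
lra.
Qed.

Hypothesis gamma_gt_bound : forall l, M l * norm2 b - eta l < gamma l.

Lemma l1_trimmed_lasso_dstationary_feasible l : T (xs l) = 0.
Proof.
apply/eqP; rewrite eq_le trimmed_ge0 andbT leNgt; apply/negP => T_gt0.
have M_ge0 : 0 <= M l by exact: bigmax_ge_id.
have := gamma_gt_bound l; have := l1_gamma_le_residual T_gt0.
have := l1_residual_lt_observation T_gt0; nra.
Qed.

End LeastSquaresL1TrimmedLasso.

Theorem mainTheorem7 (R : realType) :
  (* (a) least-squares loss *)
  (forall (L n0 q : nat) (n m p K : 'I_L -> nat) (gamma : 'I_L -> R)
          (c : forall l : 'I_L, 'cV[R]_(m l * p l))
          (D : forall l : 'I_L, 'M[R]_(m l * p l, n l))
          (b : 'cV[R]_q) (A0 : 'M[R]_(q, n0)) (A : forall l : 'I_L, 'M[R]_(q, n l))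
          (xbar : forall l : 'I_L, 'cV[R]_(n l)),
     (forall l, 0 < gamma l) ->
     (forall l, (K l < m l)%N) ->
     (forall l, D l != 0) ->
     (forall l, D l *m xbar l = c l) ->
     (forall l, gamma l >
        (sigmaK (K l) (m l) (p l) (n l) (D l))^-1 * spec_norm (A l)
          * norm2 (b - \sum_(k < L) A k *m xbar k)) ->
     let f := fun (x0 : 'cV[R]_n0) (xs : forall l : 'I_L, 'cV[R]_(n l)) =>
        2^-1 * norm2 (b - (A0 *m x0 + \sum_(l < L) A l *m xs l)) ^+ 2 in
     let Phi := fun (x0 : 'cV[R]_n0) (xs : forall l : 'I_L, 'cV[R]_(n l)) =>
        f x0 xs + \sum_(l < L) gamma l * trimmed (K l) (m l) (p l) (D l *m xs l - c l) in
     forall (x0 : 'cV[R]_n0) (xs : forall l : 'I_L, 'cV[R]_(n l)),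
       dstationary Phi x0 xs ->
       forall l, trimmed (K l) (m l) (p l) (D l *m xs l - c l) = 0)
  /\
  (* (b) least-squares loss plus weighted l1 terms; n0 = 0, p_l = 1, D_l = I, c_l = 0 *)
  (forall (L q : nat) (n K : 'I_L -> nat) (gamma eta : 'I_L -> R)
          (b : 'cV[R]_q) (A : forall l : 'I_L, 'M[R]_(q, n l)),
     (forall l, 0 < gamma l) ->
     (forall l, (K l < n l)%N) ->
     (forall l, 0 <= eta l) ->
     (forall l, gamma l >
        (\big[Num.max/0]_(j < n l) norm2 (col j (A l))) * norm2 b - eta l) ->
     let f := fun (x0 : 'cV[R]_0) (xs : forall l : 'I_L, 'cV[R]_(n l)) =>
        2^-1 * norm2 (b - \sum_(l < L) A l *m xs l) ^+ 2
        + \sum_(l < L) eta l * norm1 (xs l) in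
     let Phi := fun (x0 : 'cV[R]_0) (xs : forall l : 'I_L, 'cV[R]_(n l)) =>
        f x0 xs + \sum_(l < L) gamma l *
          trimmed (K l) (n l) 1
            (castmx (esym (muln1 (n l)), erefl) (1%:M *m xs l) - 0) in
     forall (x0 : 'cV[R]_0) (xs : forall l : 'I_L, 'cV[R]_(n l)),
       dstationary Phi x0 xs ->
       forall l, trimmed (K l) (n l) 1
         (castmx (esym (muln1 (n l)), erefl) (1%:M *m xs l) - 0) = 0).

Proof.
split.
  move=> L n0 q n m p K gamma c D b A0 A xbar gamma_gt0 _ D_neq0 Dxbar bound f Phi x0 xs stat l.
  exact: (trimmed_lasso_dstationary_feasible gamma_gt0 D_neq0 Dxbar stat bound).
move=> L q n K gamma eta b A gamma_gt0 _ eta_ge0 bound f Phi x0 xs stat l.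
exact: (l1_trimmed_lasso_dstationary_feasible gamma_gt0 eta_ge0 stat bound).
Qed.
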